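(* Let $\mathcal G$ be a network, $h\in\mathbb R^{\mathcal V}$ and $a\in\{\pm1\}$. The coordination game on $\mathcal G$ with external field $h$ has $a\mathbf 1$ as its unique equilibrium if and only if both: (a) $w\ngeq a h$; and (b) every nonempty subset $\mathcal R\subseteq\mathcal V\setminus\mathcal S_a(h)$ contains some node $i$ with $w_i^{\mathcal R}<w_i^{\mathcal V\setminus\mathcal R}+a h_i$.
   Context: A network is $\mathcal G=(\mathcal V,\mathcal E,W)$ with finite node set $\mathcal V$, links $\mathcal E\subseteq\mathcal V\times\mathcal V$, weight matrix $W\in\mathbb R_+^{\mathcal V\times\mathcal V}$ with zero diagonal, $W_{ij}>0$ iff $(i,j)\in\mathcal E$; for $\mathcal S\subseteq\mathcal V$, $w_i^{\mathcal S}=\sum_{j\in\mathcal S}W_{ij}$; $w=W\mathbf 1$. $\mathcal X=\{-1,+1\}^{\mathcal V}$. $x\ngeq y$ means $x_i<y_i$ for some $i$. $\mathcal S_a(h)=\{i\in\mathcal V: a h_i>w_i\}$. Coordination game on $\mathcal G$ with external field $h$: players $\mathcal V$, actions $\{\pm1\}$, utilities $u_i(x)=x_i(\sum_jW_{ij}x_j+h_i)$; $x^*$ is an equilibrium if for every $i$, $x_i^*$ maximizes $u_i(\cdot,x^*_{-i})$ over $\{\pm1\}$. *)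

From HB Require Import structures.
From mathcomp Require Import all_boot all_order all_algebra.
Set Implicit Arguments. Unset Strict Implicit. Unset Printing Implicit Defensive.
Import Order.TTheory GRing.Theory Num.Theory.
Local Open Scope ring_scope.

Section Network.
Variables (R : realFieldType) (V : finType).

Definition wS (W : V -> V -> R) (S : {set V}) (i : V) : R := \sum_(j in S) W i j.

Definition wdeg (W : V -> V -> R) (i : V) : R := \sum_j W i j.

Definition Sa (W : V -> V -> R) (a : R) (h : V -> R) : {set V} :=
  [set i | wdeg W i < a * h i].

Definition is_config (x : V -> R) : Prop := forall i, x i = 1 \/ x i = -1.

Definition util (W : V -> V -> R) (h : V -> R) (x : V -> R) (i : V) : R :=
  x i * (\sum_j W i j * x j + h i).

Definition update (x : V -> R) (i : V) (s : R) : V -> R :=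
  fun j => if j == i then s else x j.

Definition is_equilibrium (W : V -> V -> R) (h : V -> R) (x : V -> R) : Prop :=
  is_config x /\
  forall i (s : R), (s = 1 \/ s = -1) -> util W h (update x i s) i <= util W h x i.

End Network.

From HB Require Import structures.
From mathcomp Require Import all_boot all_order all_algebra.
From mathcomp Require Import lra.
Set Implicit Arguments. Unset Strict Implicit. Unset Printing Implicit Defensive.
Import Order.TTheory GRing.Theory Num.Theory.
Local Open Scope ring_scope.

(* Every configuration is of the form [flip T]: the action is -a on a set T
   of "deviating" players and a elsewhere; a1 itself is [flip set0].
   1. A configuration is an equilibrium iff every player's payoff
      x_i (sum_j W_ij x_j + h_i) is nonnegative (W has zero diagonal).
   2. At [flip T] the payoff of i is a*h_i + w_i^{~T} - w_i^T for i outside T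
      and its opposite inside T.  Call T [robust] when no member of T wants
      to switch back to a, i.e. w_i^{~T} + a h_i <= w_i^T for all i in T.
   3. The deviating set of any equilibrium is robust; conversely a nonempty
      robust set can be enlarged, one dissatisfied outsider at a time, until
      [flip T] is an equilibrium different from a1.
   Hence a1 is the unique equilibrium iff no nonempty robust set exists.
   Condition (b) says exactly this, because robust sets avoid S_a(h), and
   condition (a) rules out the robust set V; finally a1 is an equilibrium
   since any player with w_i + a h_i < 0 would form a robust singleton. *)

Section Coordination.
Variables (R : realFieldType) (V : finType) (W : V -> V -> R).
Variables (h : V -> R) (a : R).
Hypothesis W_nonneg : forall i j, 0 <= W i j.
Hypothesis W_diag : forall i, W i i = 0.
Hypothesis a_pm1 : a = 1 \/ a = -1.

Definition local_field (x : V -> R) (i : V) : R := \sum_j W i j * x j + h i.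

Lemma wS_setC (T : {set V}) i : wS W (~: T) i = wdeg W i - wS W T i.
Proof.
rewrite /wdeg (bigID (mem T)) /= /wS.
have -> : \sum_(j in ~: T) W i j = \sum_(j | j \notin T) W i j.
  by apply: eq_bigl => j; rewrite in_setC.
by rewrite addrAC subrr add0r.
Qed.

Lemma wS_set0 i : wS W set0 i = 0.
Proof. by rewrite /wS big_set0. Qed.

Lemma wS_setT i : wS W [set: V] i = wdeg W i.
Proof. by rewrite -setC0 wS_setC wS_set0 subr0. Qed.

Lemma wS_set1 i j : wS W [set i] j = W j i.
Proof. by rewrite /wS big_set1. Qed.

Lemma wS_ge0 (T : {set V}) i : 0 <= wS W T i.
Proof. exact: sumr_ge0. Qed.

Lemma wS_setU1 (T : {set V}) i j :
  i \notin T -> wS W (i |: T) j = W j i + wS W T j.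
Proof. by move=> iT; rewrite /wS big_setU1. Qed.

(* Since W_ii = 0, the field felt by i does not depend on x_i, so the utility
   of i after playing s is s times the current local field. *)
Lemma util_update (x : V -> R) i s :
  util W h (update x i s) i = s * local_field x i.
Proof.
rewrite /util /local_field {1}/update eqxx; congr (_ * (_ + _)).
apply: eq_bigr => j _; rewrite /update.
by case: eqP => [->|//]; rewrite W_diag !mul0r.
Qed.

Lemma equilibriumP (x : V -> R) :
  is_equilibrium W h x <->
  is_config x /\ forall i, 0 <= x i * local_field x i.
Proof.
split=> -[xpm dev]; split=> // i.
- have switch_pm : - x i = 1 \/ - x i = -1.
    by case: (xpm i) => ->; rewrite ?opprK; [right | left].
  by have := dev i _ switch_pm; rewrite util_update /util -/(local_field x i); lra.
- move=> s spm; rewrite util_update /util -/(local_field x i).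
  by have := dev i; case: (xpm i) => ->; case: spm => ->; lra.
Qed.

Lemma a_sqr : a * a = 1.
Proof. by case: a_pm1 => ->; lra. Qed.

Definition flip (T : {set V}) (j : V) : R := if j \in T then - a else a.

Lemma config_flip (x : V -> R) :
  is_config x -> forall j, x j = flip [set k | x k != a] j.
Proof.
move=> xpm j; rewrite /flip inE.
case: eqP => [-> //| /eqP xa].
by case: (xpm j) xa; case: a_pm1 => -> ->; rewrite ?eqxx ?opprK.
Qed.

Lemma payoff_ext (x y : V -> R) : (forall j, x j = y j) ->
  forall i, x i * local_field x i = y i * local_field y i.
Proof.
move=> xy i; rewrite /local_field xy; congr (_ * (_ + _)).
by apply: eq_bigr => j _; rewrite xy.
Qed.

Lemma local_field_flip (T : {set V}) i :
  local_field (flip T) i = a * (wS W (~: T) i - wS W T i) + h i.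
Proof.
rewrite /local_field (bigID (mem T)) /=; congr (_ + _).
have -> : \sum_(j in T) W i j * flip T j = - a * wS W T i.
  by rewrite /wS mulrC big_distrl; apply: eq_bigr => j jT; rewrite /flip jT.
have -> : \sum_(j | j \notin T) W i j * flip T j = a * wS W (~: T) i.
  rewrite /wS mulrC big_distrl /=; symmetry; apply: eq_big => [j|j].
  - by rewrite in_setC.
  - by rewrite in_setC /flip => /negbTE ->.
by rewrite mulNr mulrBr addrC.
Qed.

Lemma payoff_flip_in (T : {set V}) i : i \in T ->
  flip T i * local_field (flip T) i = wS W T i - wS W (~: T) i - a * h i.
Proof.
move=> iT; rewrite local_field_flip {1}/flip iT mulrDr mulrA mulNr a_sqr; lra.
Qed.

Lemma payoff_flip_out (T : {set V}) i : i \notin T ->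
  flip T i * local_field (flip T) i = wS W (~: T) i - wS W T i + a * h i.
Proof.
move=> iT; rewrite local_field_flip {1}/flip (negbTE iT) mulrDr mulrA a_sqr; lra.
Qed.

(* No member of T gains by switching back to a while the others in T keep
   playing -a. *)
Definition robust (T : {set V}) : Prop :=
  forall i, i \in T -> wS W (~: T) i + a * h i <= wS W T i.

Lemma equilibrium_robust (x : V -> R) :
  is_equilibrium W h x -> robust [set j | x j != a].
Proof.
case/equilibriumP=> xpm pay i iT.
have := pay i; rewrite (payoff_ext (config_flip xpm)) payoff_flip_in //; lra.
Qed.

Lemma robust_setU1 (T : {set V}) i :
  robust T -> i \notin T -> wS W (~: T) i + a * h i < wS W T i ->
  robust (i |: T).
Proof.
move=> rT iT better j; rewrite !wS_setC wS_setU1 // in_setU1.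
case/predU1P=> [->|jT]; first by move: better; rewrite wS_setC W_diag; lra.
by have := rT j jT; rewrite wS_setC; have := W_nonneg j i; lra.
Qed.

Lemma flip_config (T : {set V}) : is_config (flip T).
Proof.
by move=> j; rewrite /flip; case: (j \in T); case: a_pm1 => ->; rewrite ?opprK; auto.
Qed.

Lemma flip_equilibrium (T : {set V}) :
  robust T -> (forall i, i \notin T -> wS W T i <= wS W (~: T) i + a * h i) ->
  is_equilibrium W h (flip T).
Proof.
move=> rT stable; apply/equilibriumP; split=> [|i]; first exact: flip_config.
have [iT|iT] := boolP (i \in T).
- by rewrite payoff_flip_in //; have := rT i iT; lra.
- by rewrite payoff_flip_out //; have := stable i iT; lra.
Qed.

Lemma robust_grow (T : {set V}) :
  robust T -> exists2 T' : {set V}, T \subset T' & is_equilibrium W h (flip T').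
Proof.
elim: {T}_.+1 {-2}T (ltnSn #|~: T|) => // n IH T sizeT rT.
have [/exists_inP [i]|/exists_inPn stable] :=
  boolP [exists i in ~: T, wS W (~: T) i + a * h i < wS W T i].
- rewrite in_setC => iT better.
  have card_step : #|~: T| = #|~: (i |: T)|.+1.
    by rewrite (cardsD1 i (~: T)) in_setC iT setCU setIC -setDE.
  have [|T' sub eqT'] := IH (i |: T) _ (robust_setU1 rT iT better).
    by rewrite -ltnS -card_step.
  by exists T' => //; apply: subset_trans sub; apply: subsetUr.
- exists T => //; apply: flip_equilibrium => // i iT.
  by rewrite leNgt; apply: stable; rewrite in_setC.
Qed.

Lemma robust_sub_Sa (T : {set V}) : robust T -> T \subset ~: Sa W a h.
Proof.
move=> rT; apply/subsetP => i iT; rewrite in_setC inE -leNgt.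
have := rT i iT; have := wS_ge0 (~: T) i; rewrite wS_setC; lra.
Qed.

Lemma no_robust_iff :
  (forall Rs : {set V}, Rs != set0 -> Rs \subset ~: Sa W a h ->
     exists2 i, i \in Rs & wS W Rs i < wS W (~: Rs) i + a * h i) <->
  (forall T : {set V}, T != set0 -> ~ robust T).
Proof.
split=> [cond_b T T0 rT | noR Rs Rs0 _].
- have [i iT] := cond_b T T0 (robust_sub_Sa rT).
  by have := rT i iT; lra.
- case: (boolP [exists i in Rs, wS W Rs i < wS W (~: Rs) i + a * h i]).
    by case/exists_inP=> i; exists i.
  move/exists_inPn=> none; case: (noR Rs Rs0) => i iRs.
  by rewrite leNgt; apply: none.
Qed.

(* If no nonempty set is robust, a1 is an equilibrium: a player with
   w_i + a h_i < 0 would on its own form a robust set. *)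
Lemma const_equilibrium (x : V -> R) :
  (forall T : {set V}, T != set0 -> ~ robust T) -> (forall i, x i = a) ->
  is_equilibrium W h x.
Proof.
move=> noR xa; apply/equilibriumP; split=> [j|i].
  by rewrite xa; case: a_pm1 => ->; auto.
have const_flip : forall j, x j = flip set0 j by move=> j; rewrite xa /flip in_set0.
rewrite (payoff_ext const_flip) payoff_flip_out ?in_set0 //.
rewrite setC0 wS_setT wS_set0 subr0; case: (lerP 0 (wdeg W i + a * h i)) => // neg.
case: (noR [set i]); first by apply/set0Pn; exists i; rewrite in_set1.
move=> j /set1P ->; rewrite wS_setC wS_set1 W_diag; lra.
Qed.

Lemma unique_equilibrium_iff :
  (forall x : V -> R, is_equilibrium W h x <-> (forall i, x i = a)) <->
  (forall T : {set V}, T != set0 -> ~ robust T).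
Proof.
split=> [unique T T0 rT | noR x].
- have [T' sub /unique flipT'] := robust_grow rT.
  case/set0Pn: T0 => t tT; have := flipT' t.
  by rewrite /flip (subsetP sub t tT); case: a_pm1 => ->; lra.
split=> [eqx | ]; last exact: const_equilibrium.
move=> i; apply/eqP; apply: contraT => xi.
case: (noR [set j | x j != a]); last exact: equilibrium_robust.
by apply/set0Pn; exists i; rewrite inE.
Qed.

End Coordination.

Theorem proposition5 (R : realFieldType) (V : finType) (W : V -> V -> R)
    (h : V -> R) (a : R)
    (V_nonempty : (0 < #|V|)%N)
    (W_nonneg : forall i j, 0 <= W i j)
    (W_diag : forall i, W i i = 0)
    (a_pm1 : a = 1 \/ a = -1) :
  (forall x : V -> R, is_equilibrium W h x <-> (forall i, x i = a))
  <->
  ((exists i, wdeg W i < a * h i) /\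
   (forall Rs : {set V}, Rs != set0 -> Rs \subset ~: Sa W a h ->
      exists2 i, i \in Rs & wS W Rs i < wS W (~: Rs) i + a * h i)).
Proof.
rewrite (no_robust_iff h a W_nonneg) (unique_equilibrium_iff h W_nonneg W_diag a_pm1).
split=> [noR | [] //]; split=> //.
(* Condition (a): otherwise the whole network would be a robust set. *)
case: (boolP [exists i, wdeg W i < a * h i]) => [/existsP // | /existsPn above].
case: (noR [set: V]).
  by case/card_gt0P: V_nonempty => v _; apply/set0Pn; exists v.
move=> i _; rewrite setCT wS_set0 wS_setT add0r leNgt; exact: above.
Qed.
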